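(* Let $r\ge 2$ and let $GT(r)$ be the glued binary tree of depth $r$, built from the two copies $T_r^{(1)}$ and $T_r^{(2)}$ of the perfect binary tree of depth $r$. For each $i\in\{1,2\}$, the subgraph of $GT(r)$ induced by $V(T_r^{(i)})$ is an isometric subgraph of $GT(r)$. Moreover, if $u,v\in V(T_r^{(i)})$, then in $GT(r)$ there are exactly two shortest $u,v$-paths if $u$ and $v$ are both quasi-leaves, and otherwise the shortest $u,v$-path is unique.
   Context: A perfect binary tree of depth $r\ge1$ is a rooted tree in which every non-leaf vertex has exactly $2$ children and all leaves have depth $r$. The glued binary tree $GT(r)$ is obtained from two copies $T_r^{(1)}$ and $T_r^{(2)}$ of the perfect binary tree of depth $r$ by pairwise identifying their leaves, where each leaf of $T_r^{(1)}$ is identified with its image in $T_r^{(2)}$ under a fixed isomorphism of the two copies. The identified vertices are the quasi-leaves of $GT(r)$; thus the set of quasi-leaves is $V(T_r^{(1)})\cap V(T_r^{(2)})$. A subgraph $H$ of $G$ is isometric if $d_H(u,v)=d_G(u,v)$ for all $u,v\in V(H)$. *)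

From mathcomp Require Import all_boot.
Set Implicit Arguments. Unset Strict Implicit. Unset Printing Implicit Defensive.

(* walk from u to v: the sequence p lists the vertices after u *)
Definition walk (T : eqType) (e : rel T) (u v : T) (p : seq T) : bool :=
  path e u p && (last u p == v).

Definition gpath (T : eqType) (e : rel T) (u v : T) (p : seq T) : bool :=
  walk e u v p && uniq (u :: p).

Definition is_dist (T : eqType) (e : rel T) (u v : T) (n : nat) : Prop :=
  (exists p, walk e u v p /\ size p = n) /\ (forall p, walk e u v p -> n <= size p).

Definition shortest_path (T : eqType) (e : rel T) (u v : T) (p : seq T) : Prop :=
  gpath e u v p /\ (forall q, walk e u v q -> size p <= size q).

Definition induced (T : finType) (e : rel T) (S : {set T}) : rel T :=
  fun x y => [&& x \in S, y \in S & e x y].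

Definition isometric_induced (T : finType) (e : rel T) (S : {set T}) : Prop :=
  forall u v, u \in S -> v \in S ->
    forall n, is_dist (induced e S) u v n <-> is_dist e u v n.

(* The perfect binary tree of depth r is labelled in heap order:
   nodes 1 .. 2^(r+1)-1, the parent of k >= 2 is k/2, leaves are the
   k with 2^r <= k.  A vertex of GT(r) is a pair (c, k): the copy c : bool
   (false = T_r^(1), true = T_r^(2)) and the heap label k.  Leaves are
   identified across the two copies (via the identity isomorphism of labels);
   the identified vertex is represented with c = false. *)
Definition gt_valid (r : nat) (p : bool * 'I_(2 ^ r.+1)) : bool :=
  (0 < p.2) && ((p.2 < 2 ^ r) || ~~ p.1).

Definition GTV (r : nat) := {p : bool * 'I_(2 ^ r.+1) | @gt_valid r p}.

Definition gt_copy (r : nat) (x : GTV r) : bool := (val x).1.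
Definition gt_label (r : nat) (x : GTV r) : nat := (val x).2.
Definition gt_isleaf (r : nat) (x : GTV r) : bool := 2 ^ r <= gt_label x.

Definition Tset (r : nat) (i : bool) : {set GTV r} :=
  [set x | (gt_copy x == i) || gt_isleaf x].

Definition quasi_leaf (r : nat) (x : GTV r) : bool :=
  x \in Tset r false :&: Tset r true.

Definition T_edge (r : nat) (i : bool) (x y : GTV r) : bool :=
  [&& x \in Tset r i, y \in Tset r i &
      (gt_label x == (gt_label y)./2) || (gt_label y == (gt_label x)./2)].

Definition GT_adj (r : nat) : rel (GTV r) :=
  fun x y => @T_edge r false x y || @T_edge r true x y.

(* Reading off heap labels (the parent of k is k./2) maps GT(r) onto the perfect
   binary tree as a graph homomorphism, so no walk is shorter than the tree
   distance of the labels of its ends, and the tree geodesic lifts into any copy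
   containing both ends: each copy is isometric and the label sequence of a
   shortest path is the unique tree geodesic.  What is left to choose is the copy
   of the non-leaf vertices, and along a geodesic these all share one copy, since
   adjacent non-leaves do and only the ends of a geodesic can be leaves.  A
   non-leaf end forces that copy; two distinct quasi-leaves leave both copies
   available. *)

From mathcomp Require Import all_boot zify.
Set Implicit Arguments. Unset Strict Implicit. Unset Printing Implicit Defensive.

(** * Walks and induced subgraphs *)

Section Walks.

Variables (T : eqType) (e : rel T).

Lemma sub_walk (e' : rel T) u v p : subrel e e' -> walk e u v p -> walk e' u v p.
Proof. by move=> ee' /andP[pp pl]; rewrite /walk (sub_path ee' pp). Qed.

Lemma walk_shortcut u p : path e u p -> ~~ uniq (u :: p) ->
  exists q, [/\ path e u q, last u q = last u p & size q < size p].
Proof.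
elim: p u => [|x p IH] u // pp; rewrite [uniq _]/= negb_and negbK.
case/orP=> [up|xpu].
  move: pp; case/splitPr: up => p1 p2; rewrite cat_path => /and3P[_ _ p2p].
  by exists p2; rewrite last_cat size_cat /= addnS ltnS leq_addl.
case/andP: pp => ux /IH/(_ xpu) [q [xq ql qs]].
by exists (x :: q); rewrite /= ux xq ql ltnS.
Qed.

Lemma min_walk_shortest_path u v p : walk e u v p ->
  (forall q, walk e u v q -> size p <= size q) -> shortest_path e u v p.
Proof.
move=> pw pmin; split=> //; rewrite /gpath pw /=.
apply/negPn/negP; case/andP: pw => pp /eqP pl.
case/(walk_shortcut pp)=> q [qp ql qs].
by have := pmin q; rewrite /walk qp ql pl eqxx leqNgt qs => /(_ isT).
Qed.

Lemma is_dist_iff_eq u v D : (exists p, walk e u v p /\ size p = D) ->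
  (forall p, walk e u v p -> D <= size p) -> forall n, is_dist e u v n <-> n = D.
Proof.
move=> [p [pw <-]] pmin n; split=> [[[q [qw <-]] qmin]|->].
  by apply/eqP; rewrite eqn_leq qmin // pmin.
by split=> //; exists p.
Qed.

End Walks.

Lemma induced_sub (T : finType) (e : rel T) (S : {set T}) : subrel (induced e S) e.
Proof. by move=> x y /and3P[]. Qed.

Lemma induced_path_subset (T : finType) (e : rel T) (S : {set T}) x p :
  path (induced e S) x p -> {subset p <= S}.
Proof.
elim: p x => [|y p IH] x //= /andP[/and3P[_ yS _] yp] z.
by rewrite inE => /predU1P[->|/(IH _ yp)].
Qed.

(** * Distances in the heap-ordered binary tree *)

(* Positivity rules out the spurious edge between 1 and 0 = 1./2. *)
Definition heap_adj : rel nat :=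
  fun a b => [&& 0 < a, 0 < b & (a == b./2) || (b == a./2)].

(* [n] is fuel: each step halves the larger label, so [a + b] steps suffice. *)
Fixpoint heap_dist_rec (n a b : nat) : nat :=
  if n is n'.+1 then
    if a == b then 0
    else if b < a then (heap_dist_rec n' a./2 b).+1 else (heap_dist_rec n' a b./2).+1
  else 0.

Definition heap_dist (a b : nat) : nat := heap_dist_rec (a + b) a b.

Definition heap_geodesic (a b : nat) (s : seq nat) : bool :=
  walk heap_adj a b s && (size s == heap_dist a b).

Lemma heap_dist_rec_fuel n m a b : 0 < a -> 0 < b -> a + b <= n -> a + b <= m ->
  heap_dist_rec n a b = heap_dist_rec m a b.
Proof.
elim: n m a b => [|n IH] [|m] a b a0 b0 abn abm /=; try lia.
by case: eqP => // ab; case: ltnP => ba; congr _.+1; apply: IH; rewrite -?divn2; lia.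
Qed.

Lemma heap_distE a b : 0 < a -> 0 < b -> heap_dist a b =
  if a == b then 0 else if b < a then (heap_dist a./2 b).+1 else (heap_dist a b./2).+1.
Proof.
move=> a0 b0; rewrite /heap_dist -[a + b]prednK ?addn_gt0 ?a0 //=.
by case: eqP => // ab; case: ltnP => ba; congr _.+1; apply: heap_dist_rec_fuel;
  rewrite -?divn2; lia.
Qed.

Lemma heap_distxx a : heap_dist a a = 0.
Proof. by rewrite /heap_dist; case: (a + a) => //= n; rewrite eqxx. Qed.

Lemma heap_dist_half x b : 1 < x -> 0 < b ->
  heap_dist x b <= (heap_dist x./2 b).+1 /\ heap_dist x./2 b <= (heap_dist x b).+1.
Proof.
have [n] := ubnP b; elim: n b x => // n IH b x bn x1 b0.
have x0 : 0 < x by lia.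
have x20 : 0 < x./2 by rewrite -divn2; lia.
have x2x : x./2 < x by rewrite -divn2; lia.
rewrite [heap_dist x b]heap_distE // [heap_dist x./2 b]heap_distE //.
case: (ltngtP x b) => xb.
- have b1 : 0 < b./2 by rewrite -divn2; lia.
  have [-> ->] : (x./2 == b) = false /\ (b < x./2) = false by split; lia.
  by have := IH b./2 x; rewrite -!divn2 in x20 b1 *; lia.
- lia.
- have [-> ->] : (x./2 == b) = false /\ (b < x./2) = false by split; lia.
  by rewrite -xb heap_distxx.
Qed.

Lemma heap_dist_adj a x b : heap_adj a x -> 0 < b -> heap_dist a b <= (heap_dist x b).+1.
Proof.
case/and3P=> a0 x0 /orP[]/eqP ax b0.
  have x1 : 1 < x by rewrite ax -divn2 in a0; lia.
  by rewrite ax; case: (heap_dist_half x1 b0).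
have a1 : 1 < a by rewrite ax -divn2 in x0; lia.
by rewrite ax; case: (heap_dist_half a1 b0).
Qed.

Lemma heap_dist_child_l a b c : 0 < b -> b < a -> c./2 = a ->
  heap_dist c b = (heap_dist a b).+1.
Proof.
move=> b0 ba ca; have ac : a < c by rewrite -ca -divn2 in ba *; lia.
rewrite [LHS]heap_distE ?ca; try lia.
by have [-> ->] : (c == b) = false /\ (b < c) by split; lia.
Qed.

Lemma heap_dist_child_r a b c : 0 < a -> a < b -> c./2 = b ->
  heap_dist a c = (heap_dist a b).+1.
Proof.
move=> a0 ab cb; have bc : b < c by rewrite -cb -divn2 in ab *; lia.
rewrite [LHS]heap_distE ?cb; try lia.
by have [-> ->] : (a == c) = false /\ (c < a) = false by split; lia.
Qed.

Lemma heap_path_last_gt0 a s : 0 < a -> path heap_adj a s -> 0 < last a s.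
Proof. by elim: s a => //= x s IH a _ /andP[/and3P[_ x0 _]]; apply: IH. Qed.

Lemma heap_dist_walk a b s : 0 < a -> walk heap_adj a b s -> heap_dist a b <= size s.
Proof.
elim: s a => [|x s IH] a a0 /andP[/= sp /eqP sb]; first by rewrite -sb heap_distxx.
case/andP: sp => ax xs; have x0 : 0 < x by case/and3P: ax.
have b0 : 0 < b by rewrite -sb heap_path_last_gt0.
have := IH x x0; rewrite /walk xs sb eqxx => /(_ isT).
by have := heap_dist_adj ax b0; rewrite /=; lia.
Qed.

Lemma heap_geodesic_behead a b x s : 0 < b ->
  heap_geodesic a b (x :: s) -> heap_geodesic x b s.
Proof.
move=> b0 /andP[/andP[/= /andP[ax xs] xsb] /eqP sz].
have x0 : 0 < x by case/and3P: ax.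
have xw : walk heap_adj x b s by rewrite /walk xs.
rewrite /heap_geodesic xw eqn_leq (heap_dist_walk x0 xw) andbT.
by have := heap_dist_adj ax b0; lia.
Qed.

Lemma heap_geodesic_up a b s : 0 < a -> 0 < b -> heap_geodesic a b s -> b < a ->
  exists s', s = a./2 :: s'.
Proof.
move=> a0 b0 /andP[/andP[sp /eqP sb] /eqP sz] ba.
case: s sp sb sz => [|x s] /=; first by move=> _ ab; rewrite ab ltnn in ba.
case/andP=> /and3P[_ x0 /orP[/eqP ax|/eqP ->]] xs sb sz; last by exists s.
have xw : walk heap_adj x b s by rewrite /walk xs sb eqxx.
exfalso; have := heap_dist_walk x0 xw.
rewrite (heap_dist_child_l b0 ba (esym ax)).
by rewrite -sz ltnNge leqnSn.
Qed.

Lemma heap_geodesic_down a b s : 0 < a -> 0 < b -> heap_geodesic a b s -> a < b ->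
  exists s', [/\ s = rcons s' b, last a s' = b./2 & heap_geodesic a b./2 s'].
Proof.
move=> a0 b0 /andP[/andP[sp /eqP sb] /eqP sz] ab.
case/lastP: s sp sb sz => [|s z] /=; first by move=> _ ab'; rewrite ab' ltnn in ab.
rewrite rcons_path last_rcons size_rcons => /andP[sp yz] zb sz; subst z.
set y := last a s in yz *.
have sw : walk heap_adj a y s by rewrite /walk sp eqxx.
have yd := heap_dist_walk a0 sw.
case/and3P: yz => y0 _ /orP[/eqP yb|/eqP byc]; last first.
  by exfalso; rewrite (heap_dist_child_r a0 ab (esym byc)) -sz ltnNge leqnSn in yd.
have dE : heap_dist a b = (heap_dist a b./2).+1.
  rewrite heap_distE //.
  by have [-> ->] : (a == b) = false /\ (b < a) = false by split; lia.
exists s; split=> //; rewrite /heap_geodesic -yb sw /=.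
by rewrite eqn_leq yd yb -ltnS sz dE ltnSn.
Qed.

Lemma heap_geodesic_unique a b s t : 0 < a -> 0 < b ->
  heap_geodesic a b s -> heap_geodesic a b t -> s = t.
Proof.
have [n] := ubnP (size s); elim: n a b s t => // n IH a b s t sn a0 b0 hs ht.
case: (ltngtP b a) => ba.
- have a20 : 0 < a./2 by rewrite -divn2; lia.
  have [s' es] := heap_geodesic_up a0 b0 hs ba.
  have [t' et] := heap_geodesic_up a0 b0 ht ba.
  subst s t; congr cons; apply: (IH a./2 b) => //.
  - exact: heap_geodesic_behead b0 hs.
  - exact: heap_geodesic_behead b0 ht.
- have b20 : 0 < b./2 by rewrite -divn2; lia.
  have [s' [es _ hs']] := heap_geodesic_down a0 b0 hs ba.
  have [t' [et _ ht']] := heap_geodesic_down a0 b0 ht ba.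
  subst s t; congr rcons; apply: (IH a b./2) => //.
  by rewrite size_rcons in sn.
- move: hs ht => /andP[_ /eqP] + /andP[_ /eqP].
  by rewrite ba heap_distxx; case: s {sn}; case: t.
Qed.

Lemma heap_geodesic_exists a b : 0 < a -> 0 < b ->
  exists2 s, heap_geodesic a b s & all (fun k => k <= maxn a b) s.
Proof.
have [n] := ubnP (a + b); elim: n a b => // n IH a b abn a0 b0.
case: (ltngtP a b) => ab.
- have b20 : 0 < b./2 by rewrite -divn2; lia.
  have abn' : a + b./2 < n by rewrite -divn2; lia.
  have [s /andP[/andP[sp /eqP sb] /eqP sz] sa] := IH a b./2 abn' a0 b20.
  exists (rcons s b).
    rewrite /heap_geodesic /walk rcons_path last_rcons size_rcons sp sz eqxx /=.
    rewrite sb /heap_adj b0 b20 eqxx /= [heap_dist a b]heap_distE //.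
    by have [-> ->] : (a == b) = false /\ (b < a) = false by split; lia.
  rewrite all_rcons leqnn /=; apply: sub_all sa => k /leq_trans; apply.
  by rewrite geq_max -divn2; lia.
- have a20 : 0 < a./2 by rewrite -divn2; lia.
  have abn' : a./2 + b < n by rewrite -divn2; lia.
  have [s /andP[/andP[sp /eqP sb] /eqP sz] sa] := IH a./2 b abn' a20 b0.
  exists (a./2 :: s).
    rewrite /heap_geodesic /walk /= sp sb sz /heap_adj a0 a20 eqxx orbT /=.
    rewrite [heap_dist a b]heap_distE // ab.
    have -> : (a == b) = false by lia.
    by rewrite !eqxx.
  rewrite /= (_ : a./2 <= a) /=; last by rewrite -divn2 leq_div.
  apply: sub_all sa => k /leq_trans; apply.
  by rewrite geq_max -divn2; lia.
- by exists [::]; rewrite // /heap_geodesic /walk /= ab heap_distxx eqxx.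
Qed.

(** * The glued binary tree *)

Section GluedTree.

Variable r : nat.

Local Notation V := (GTV r).
Local Notation GT := (@GT_adj r).
Local Notation label := (@gt_label r).

Lemma gt_label_gt0 (x : V) : 0 < label x.
Proof. by case: x => [[c k] hv]; rewrite /gt_label /=; case/andP: hv. Qed.

Lemma gt_label_lt (x : V) : label x < 2 ^ r.+1.
Proof. exact: ltn_ord. Qed.

Lemma gt_leaf_copy (x : V) : gt_isleaf x -> gt_copy x = false.
Proof.
case: x => [[c k] /= hv]; rewrite /gt_isleaf /gt_label /gt_copy /= => leaf.
by case/andP: hv => _; rewrite ltnNge leaf; case: c.
Qed.

Lemma gtv_eq (x y : V) : label x = label y -> gt_copy x = gt_copy y -> x = y.
Proof.
case: x y => [[c k] hx] [[c' k'] hy]; rewrite /gt_label /gt_copy /= => kk' cc'.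
by apply: val_inj; rewrite /= cc' (val_inj kk').
Qed.

Lemma quasi_leafE (x : V) : quasi_leaf x = gt_isleaf x.
Proof. by rewrite /quasi_leaf !inE; case: (gt_copy x); case: (gt_isleaf x). Qed.

Lemma Tset_nonleaf_copy i (x : V) : x \in Tset r i -> ~~ gt_isleaf x -> gt_copy x = i.
Proof. by rewrite inE => /orP[/eqP|->]. Qed.

Lemma Tset_label_inj i : {in Tset r i &, injective label}.
Proof.
move=> x y xT yT xy; apply: gtv_eq => //.
have leafE : gt_isleaf y = gt_isleaf x by rewrite /gt_isleaf xy.
have [xl|xl] := boolP (gt_isleaf x); first by rewrite !gt_leaf_copy // leafE.
by rewrite (Tset_nonleaf_copy xT xl) (Tset_nonleaf_copy yT) // leafE.
Qed.

Lemma Tset_vertex_exists i k : 0 < k < 2 ^ r.+1 ->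
  exists2 w : V, w \in Tset r i & label w = k.
Proof.
case/andP=> k0 kr.
have hv : gt_valid (i && (k < 2 ^ r), Ordinal kr).
  by rewrite /gt_valid /= k0; case: (k < 2 ^ r); rewrite ?andbF.
exists (exist (@gt_valid r) _ hv) => //.
rewrite inE /gt_copy /gt_isleaf /gt_label /= (leqNgt (2 ^ r)).
by case: (k < 2 ^ r); rewrite ?andbT ?eqxx ?orbT.
Qed.

Lemma gt_adj_heap : {homo label : x y / GT x y >-> heap_adj x y}.
Proof. by move=> x y; rewrite /heap_adj !gt_label_gt0 => /orP[] /and3P[]. Qed.

Lemma gt_adj_copy (x y : V) : GT x y -> ~~ gt_isleaf x -> ~~ gt_isleaf y ->
  gt_copy x = gt_copy y.
Proof.
case/orP=> /and3P[xT yT _] xl yl;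
by rewrite (Tset_nonleaf_copy xT xl) (Tset_nonleaf_copy yT yl).
Qed.

Lemma half_label_nonleaf (x y : V) : label y = (label x)./2 -> ~~ gt_isleaf y.
Proof.
move=> yx; rewrite /gt_isleaf -ltnNge yx.
by have := gt_label_lt x; rewrite expnS -divn2; lia.
Qed.

Lemma gt_adj_leaf (x y : V) : GT x y -> gt_isleaf x -> ~~ gt_isleaf y.
Proof.
move=> /gt_adj_heap /and3P[_ _ /orP[]/eqP xy] xl; last exact: half_label_nonleaf xy.
by have := gt_label_lt y; move: xl; rewrite /gt_isleaf xy expnS -divn2; lia.
Qed.

Lemma induced_Tset_adj i (x y : V) : x \in Tset r i -> y \in Tset r i ->
  heap_adj (label x) (label y) -> induced GT (Tset r i) x y.
Proof.
move=> xT yT /and3P[_ _ xy]; rewrite /induced xT yT /GT_adj /T_edge.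
by case: i xT yT => xT yT; rewrite xT yT xy ?orbT.
Qed.

Lemma walk_label (u v : V) q : walk GT u v q ->
  walk heap_adj (label u) (label v) (map label q).
Proof.
by case/andP=> qp /eqP ql; rewrite /walk (homo_path gt_adj_heap qp) last_map ql eqxx.
Qed.

Lemma gt_walk_size (u v : V) q : walk GT u v q -> heap_dist (label u) (label v) <= size q.
Proof. by move/walk_label/(heap_dist_walk (gt_label_gt0 u)); rewrite size_map. Qed.

Lemma Tset_lift_path i (u : V) s : u \in Tset r i -> path heap_adj (label u) s ->
  all (fun k => k < 2 ^ r.+1) s ->
  exists2 q, path (induced GT (Tset r i)) u q & map label q = s.
Proof.
elim: s u => [|k s IH] u uT /=; first by exists [::].
case/andP=> uk ks /andP[kr sr].
have [w wT wk] : exists2 w : V, w \in Tset r i & label w = k.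
  by apply: Tset_vertex_exists; rewrite kr andbT; case/and3P: uk.
have [|q qp qs] := IH w wT _ sr; first by rewrite wk.
by exists (w :: q); rewrite /= ?wk ?qs // qp andbT induced_Tset_adj ?wk.
Qed.

Lemma Tset_geodesic_exists i (u v : V) : u \in Tset r i -> v \in Tset r i ->
  exists2 q, walk (induced GT (Tset r i)) u v q & size q = heap_dist (label u) (label v).
Proof.
move=> uT vT.
have [s /andP[/andP[sp /eqP sv] /eqP sz] sb] :=
  heap_geodesic_exists (gt_label_gt0 u) (gt_label_gt0 v).
have sr : all (fun k => k < 2 ^ r.+1) s.
  by apply: sub_all sb => k /leq_ltn_trans; apply; rewrite gtn_max !gt_label_lt.
have [q qp qs] := Tset_lift_path uT sp sr.
exists q; last by rewrite -sz -qs size_map.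
rewrite /walk qp; apply/eqP/(Tset_label_inj _ vT); last by rewrite -last_map qs sv.
by have := mem_last u q; rewrite inE => /predU1P[->|/(induced_path_subset qp)].
Qed.

Lemma Tset_isometric i : isometric_induced GT (Tset r i).
Proof.
move=> u v uT vT n.
have [p pw psz] := Tset_geodesic_exists uT vT.
have pw' := sub_walk (@induced_sub _ _ _) pw.
have lb := @gt_walk_size u v.
rewrite (is_dist_iff_eq (ex_intro _ p (conj pw psz))).
  by rewrite (is_dist_iff_eq (ex_intro _ p (conj pw' psz))).
by move=> q /(sub_walk (@induced_sub _ _ _)) /lb.
Qed.

Lemma Tset_shortest_path_exists i (u v : V) : u \in Tset r i -> v \in Tset r i ->
  exists2 p, shortest_path GT u v p & {subset p <= Tset r i}.
Proof.
move=> uT vT; have [p pw psz] := Tset_geodesic_exists uT vT.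
exists p; last by case/andP: pw => /induced_path_subset.
apply: min_walk_shortest_path => [|q /gt_walk_size]; last by rewrite psz.
exact: sub_walk (@induced_sub _ _ _) pw.
Qed.

Lemma shortest_path_size i (u v : V) q : u \in Tset r i -> v \in Tset r i ->
  shortest_path GT u v q -> size q = heap_dist (label u) (label v).
Proof.
move=> uT vT [/andP[qw _] qmin].
have [p pw psz] := Tset_geodesic_exists uT vT.
apply/eqP; rewrite eqn_leq gt_walk_size // andbT -psz.
exact/qmin/(sub_walk (@induced_sub _ _ _) pw).
Qed.

Lemma shortest_path_heap_geodesic i (u v : V) q : u \in Tset r i -> v \in Tset r i ->
  shortest_path GT u v q -> heap_geodesic (label u) (label v) (map label q).
Proof.
move=> uT vT sq; case: (sq) => /andP[qw _] _.
by rewrite /heap_geodesic walk_label // size_map (shortest_path_size uT vT sq) eqxx.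
Qed.

(* Peel the step at the end with the larger label: the new end is a parent,
   hence a non-leaf adjacent to the removed vertex. *)
Lemma geodesic_copy_const (x v : V) q : walk GT x v q ->
  heap_geodesic (label x) (label v) (map label q) ->
  exists c, {in x :: q, forall y, ~~ gt_isleaf y -> gt_copy y = c}.
Proof.
have [n] := ubnP (size q); elim: n x v q => // n IH x v q qn qw qg.
have [x0 v0] := (gt_label_gt0 x, gt_label_gt0 v).
case: (ltngtP (label v) (label x)) => vx.
- have [s' qe] := heap_geodesic_up x0 v0 qg vx.
  case: q qn qw qg qe => // y q' /= qn /andP[/andP[xy q'p] q'v] qg [yx _].
  have yl := half_label_nonleaf yx.
  have [|c hc] := IH y v q' qn _ (heap_geodesic_behead v0 qg); first exact/andP.
  exists c => z; rewrite inE => /predU1P[-> zl|]; last exact: hc.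
  by rewrite (gt_adj_copy xy zl yl) hc ?mem_head.
- have [s' [qe s'l s'g]] := heap_geodesic_down x0 v0 qg vx.
  case/lastP: q qn qw qg qe => [|q' z].
    by move=> _ _ _ /(congr1 size); rewrite size_rcons.
  rewrite map_rcons size_rcons => qn.
  rewrite /walk rcons_path last_rcons => /andP[/andP[q'p yz] /eqP zv] _.
  move/rcons_inj=> [q's _]; subst z; set y := last x q' in yz.
  have yv : label y = (label v)./2 by rewrite -s'l -q's last_map.
  have yl := half_label_nonleaf yv.
  have q'w : walk GT x y q' by rewrite /walk q'p eqxx.
  have q'g : heap_geodesic (label x) (label y) (map label q') by rewrite yv q's.
  have [c hc] := IH x y q' qn q'w q'g.
  exists c => w; rewrite -rcons_cons mem_rcons inE => /predU1P[-> wl|]; last exact: hc.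
  by rewrite -(gt_adj_copy yz yl wl) hc ?mem_last.
- move: qg => /andP[_ /eqP]; rewrite size_map vx heap_distxx.
  case: q {IH qn qw} => // _; exists (gt_copy x) => y.
  by rewrite mem_seq1 => /eqP->.
Qed.

Lemma shortest_path_sub_Tset i (u v w : V) q : u \in Tset r i -> v \in Tset r i ->
  shortest_path GT u v q -> w \in u :: q -> w \in Tset r i -> ~~ gt_isleaf w ->
  {subset q <= Tset r i}.
Proof.
move=> uT vT sq wq wT wl; case: (sq) => /andP[qw _] _.
have [c hc] := geodesic_copy_const qw (shortest_path_heap_geodesic uT vT sq).
move=> x xq; rewrite inE; apply/orP; have [xl|xl] := boolP (gt_isleaf x); [by right|left].
by rewrite hc ?inE ?xq ?orbT // -(hc w wq wl) (Tset_nonleaf_copy wT wl).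
Qed.

Lemma Tset_shortest_path_unique i (u v : V) p q : u \in Tset r i -> v \in Tset r i ->
  shortest_path GT u v p -> shortest_path GT u v q ->
  {subset p <= Tset r i} -> {subset q <= Tset r i} -> p = q.
Proof.
move=> uT vT sp sq pT qT.
apply: (inj_in_map (@Tset_label_inj i)); rewrite ?inE; try exact/allP.
apply: (heap_geodesic_unique (gt_label_gt0 u) (gt_label_gt0 v)).
  exact: shortest_path_heap_geodesic uT vT sp.
exact: shortest_path_heap_geodesic uT vT sq.
Qed.

Lemma shortest_path_unique i (u v : V) : u \in Tset r i -> v \in Tset r i ->
  ~~ [&& gt_isleaf u, gt_isleaf v & u != v] ->
  exists p, shortest_path GT u v p /\ (forall q, shortest_path GT u v q -> q = p).
Proof.
move=> uT vT uv.
have qT q : shortest_path GT u v q -> {subset q <= Tset r i}.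
  move=> sq; have [euv|nuv] := eqVneq u v.
    move: (shortest_path_size uT vT sq); rewrite euv heap_distxx.
    by case: q {sq}.
  have [w [wq wT wl]] : exists w, [/\ w \in u :: q, w \in Tset r i & ~~ gt_isleaf w].
    case: (sq) => /andP[/andP[_ /eqP qv] _] _.
    move: uv; rewrite nuv andbT negb_and => /orP[ul|vl].
      by exists u; split=> //; rewrite mem_head.
    by exists v; split=> //; rewrite -qv mem_last.
  exact: shortest_path_sub_Tset uT vT sq wq wT wl.
have [p sp pT] := Tset_shortest_path_exists uT vT.
exists p; split=> // q sq.
exact: Tset_shortest_path_unique uT vT sq sp (qT q sq) pT.
Qed.

Lemma shortest_paths_between_leaves (u v : V) : gt_isleaf u -> gt_isleaf v -> u != v ->
  exists p1 p2, p1 <> p2 /\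
    shortest_path GT u v p1 /\ shortest_path GT u v p2 /\
    (forall q, shortest_path GT u v q -> q = p1 \/ q = p2).
Proof.
move=> ul vl uv.
have uT c : u \in Tset r c by rewrite inE ul orbT.
have vT c : v \in Tset r c by rewrite inE vl orbT.
have head q : shortest_path GT u v q -> exists y q', q = y :: q' /\ ~~ gt_isleaf y.
  case: q => [|y q] [/andP[/andP[/= qp /eqP qv] _] _]; first by rewrite qv eqxx in uv.
  by exists y, q; split=> //; case/andP: qp => uy _; exact: gt_adj_leaf uy ul.
have head_copy c p : shortest_path GT u v p -> {subset p <= Tset r c} ->
    exists y p', p = y :: p' /\ gt_copy y = c.
  move=> sp pT; have [y [p' [ep yl]]] := head p sp.
  by exists y, p'; split=> //; apply: Tset_nonleaf_copy yl; rewrite pT // ep mem_head.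
have [p0 sp0 p0T] := Tset_shortest_path_exists (uT false) (vT false).
have [p1 sp1 p1T] := Tset_shortest_path_exists (uT true) (vT true).
exists p0, p1; split.
  have [y0 [p0' [-> c0]]] := head_copy _ _ sp0 p0T.
  have [y1 [p1' [-> c1]]] := head_copy _ _ sp1 p1T.
  by case=> e _; move: c0; rewrite e c1.
do 2!split=> //; move=> q sq.
have [y [q' [eq yl]]] := head q sq.
have qT : {subset q <= Tset r (gt_copy y)}.
  by apply: shortest_path_sub_Tset (uT _) (vT _) sq _ _ yl; rewrite ?eq ?inE ?eqxx ?orbT.
move: qT; case: (gt_copy y) => qT.
  by right; exact: Tset_shortest_path_unique (uT true) (vT true) sq sp1 qT p1T.
by left; exact: Tset_shortest_path_unique (uT false) (vT false) sq sp0 qT p0T.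
Qed.

End GluedTree.

Unset Implicit Arguments.

Theorem mainTheorem1 (r : nat) (hr : 2 <= r) (i : bool) :
  isometric_induced (@GT_adj r) (Tset r i) /\
  (forall u v : GTV r, u \in Tset r i -> v \in Tset r i ->
     ([&& quasi_leaf u, quasi_leaf v & u != v] ->
        exists p1 p2, p1 <> p2 /\
          shortest_path (@GT_adj r) u v p1 /\ shortest_path (@GT_adj r) u v p2 /\
          (forall q, shortest_path (@GT_adj r) u v q -> q = p1 \/ q = p2)) /\
     (~~ [&& quasi_leaf u, quasi_leaf v & u != v] ->
        exists p, shortest_path (@GT_adj r) u v p /\
          (forall q, shortest_path (@GT_adj r) u v q -> q = p))).
Proof.
split; first exact: Tset_isometric.
move=> u v uT vT; rewrite !quasi_leafE; split.
  by case/and3P; exact: shortest_paths_between_leaves.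
exact: shortest_path_unique uT vT.
Qed.
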